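(* For $\mu\in\mathbb C$ and complex numbers $x_1,\dots,x_N$ and $y_1,\dots,y_N$ (pairwise distinct within each family and $x_a\neq y_b$, so that all expressions are defined), $$\mathcal I^{(\mu)}_N(\{x\},\{y\})=(-1)^N\mathcal A^-_{\{x\}}\!\left[\mu E^+_{\{y\}}\right]=(-1)^N\mathcal A^+_{\{y\}}\!\left[\mu E^-_{\{x\}}\right].$$
   Context: Let $\eta\in\mathbb C\setminus\{0\}$. For a family $\{x\}=\{x_1,\dots,x_M\}$ and $y\in\mathbb C$, $E^\pm_{\{x\}}(y)=\prod_{n=1}^M\frac{y-x_n\pm\eta}{y-x_n}$. With $V(x_1,\dots,x_M)=\prod_{1\le b<a\le M}(x_a-x_b)$, for pairwise distinct $x_a$ and a function $f$ defined there, $\mathcal A^\pm_{\{x\}}[f]=\det_{1\le a,b\le M}[x_a^{b-1}-f(x_a)(x_a\pm\eta)^{b-1}]/V(x_1,\dots,x_M)$. Let $t_\mu(x)=\frac\mu x-\frac1{x+\eta}$. The generalized Izergin determinant is $$\mathcal I^{(\mu)}_N(\{x\},\{y\})=\frac{\prod_{a,b=1}^N(x_a-y_b+\eta)}{V(x_1,\dots,x_N)V(y_N,\dots,y_1)}\det_{1\le a,b\le N}\big[t_\mu(x_a-y_b)\big].$$ *)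

From HB Require Import structures.
From mathcomp Require Import all_boot all_order all_algebra.
From mathcomp Require Import complex reals.
Set Implicit Arguments. Unset Strict Implicit. Unset Printing Implicit Defensive.
Import Order.TTheory GRing.Theory Num.Theory.
Local Open Scope ring_scope.

(* V(x_1,...,x_M) = prod_{1<=b<a<=M} (x_a - x_b); indices 1..M are 'I_M (0-based) *)
Definition Vdm (C : comRingType) (M : nat) (x : 'I_M -> C) : C :=
  \prod_(a < M) \prod_(b < M | (b < a)%N) (x a - x b).

Definition Eplus (C : fieldType) (eta : C) (M : nat) (x : 'I_M -> C) (y : C) : C :=
  \prod_(n < M) ((y - x n + eta) / (y - x n)).
Definition Eminus (C : fieldType) (eta : C) (M : nat) (x : 'I_M -> C) (y : C) : C :=
  \prod_(n < M) ((y - x n - eta) / (y - x n)).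

(* A^+_{x}[f] and A^-_{x}[f]; column b : 'I_M carries exponent b = (b-1 in 1-based) *)
Definition Aplus (C : fieldType) (eta : C) (M : nat) (x : 'I_M -> C) (f : C -> C) : C :=
  \det (\matrix_(a < M, b < M) (x a ^+ b - f (x a) * (x a + eta) ^+ b)) / Vdm x.
Definition Aminus (C : fieldType) (eta : C) (M : nat) (x : 'I_M -> C) (f : C -> C) : C :=
  \det (\matrix_(a < M, b < M) (x a ^+ b - f (x a) * (x a - eta) ^+ b)) / Vdm x.

Definition tmu (C : fieldType) (eta mu z : C) : C := mu / z - 1 / (z + eta).

(* generalized Izergin determinant; V(y_N,...,y_1) is Vdm of the reversed family *)
Definition Izergin (C : fieldType) (eta mu : C) (N : nat) (x y : 'I_N -> C) : C :=
  (\prod_(a < N) \prod_(b < N) (x a - y b + eta))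
  / (Vdm x * Vdm (fun i : 'I_N => y (rev_ord i)))
  * \det (\matrix_(a < N, b < N) tmu eta mu (x a - y b)).

From HB Require Import structures.
From mathcomp Require Import all_boot all_order all_algebra all_fingroup.
From mathcomp Require Import complex reals.
From mathcomp Require Import zify ring.
Set Implicit Arguments. Unset Strict Implicit. Unset Printing Implicit Defensive.
Import Order.TTheory GRing.Theory Num.Theory.
Local Open Scope ring_scope.

(* Since t_mu(x_a - y_b) = mu/(x_a - y_b) - 1/(x_a + eta - y_b), multilinearity in
   the rows expands the Izergin determinant as a sum over subsets S of rows of
   Cauchy determinants det[1/(u_a - y_b)], where u_a = x_a for a in S and
   u_a = x_a + eta otherwise.  By the Cauchy formula each of them is
   V(u) V(y_N,...,y_1) / prod (u_a - y_b); the prefactor prod (x_a - y_b + eta)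
   cancels the denominator on the rows outside S and leaves E^+_{y}(x_a) on the
   rows in S.  The determinant defining A^- expands over the same subsets into
   Vandermonde determinants of families whose differences are those of u, and
   the two sums agree term by term.  The second identity is the first one applied
   to I_{-eta}(y, x), which equals I_eta(x, y). *)

Section Multilinearity.
Variables (R : comNzRingType) (n : nat).

Lemma det_add_rows (A B : 'M[R]_n) :
  \det (A + B) =
  \sum_(S : {ffun 'I_n -> bool}) \det (\matrix_(i, j) (if S i then B i j else A i j)).
Proof.
rewrite /determinant.
under eq_bigr => s _.
  rewrite (eq_bigr (fun i => \sum_(c : bool) (if c then B i (s i) else A i (s i)))); last first.
    by move=> i _; rewrite big_bool /= mxE addrC.
  rewrite bigA_distr_bigA mulr_sumr.
  over.
rewrite exchange_big /=; apply: eq_bigr => S _; apply: eq_bigr => s _.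
by congr (_ * _); apply: eq_bigr => i _; rewrite mxE.
Qed.

Lemma det_scale_rows (c : 'I_n -> R) (A : 'M[R]_n) :
  \det (\matrix_(i, j) (c i * A i j)) = \prod_i c i * \det A.
Proof.
rewrite /determinant mulr_sumr; apply: eq_bigr => s _.
rewrite mulrCA; congr (_ * _).
by rewrite -big_split /=; apply: eq_bigr => i _; rewrite mxE.
Qed.

End Multilinearity.

Section Vandermonde.
Variables (R : comNzRingType) (n : nat).
Implicit Types (u w y : 'I_n -> R).

Lemma prod_ltn_exchange (G : 'I_n -> 'I_n -> R) :
  \prod_(i < n) \prod_(j < n | (i < j)%N) G i j =
  \prod_(j < n) \prod_(i < n | (i < j)%N) G i j.
Proof.
under eq_bigr do rewrite big_mkcond.
by rewrite exchange_big; apply: eq_bigr => j _; rewrite [RHS]big_mkcond.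
Qed.

Lemma det_powers u : \det (\matrix_(a, b) u a ^+ b) = Vdm u.
Proof.
have -> : \matrix_(a, b) u a ^+ b = (Vandermonde n (\row_j u j))^T.
  by apply/matrixP => i j; rewrite !mxE.
rewrite det_tr det_Vandermonde /Vdm prod_ltn_exchange.
by apply: eq_bigr => a _; apply: eq_bigr => b _; rewrite !mxE.
Qed.

Lemma eq_Vdm u w : (forall a b, u a - u b = w a - w b) -> Vdm u = Vdm w.
Proof. by move=> eq_uw; apply: eq_bigr => a _; apply: eq_bigr => b _. Qed.

Lemma Vdm_rev y :
  Vdm (fun i => y (rev_ord i)) = \prod_(a < n) \prod_(b < n | (a < b)%N) (y a - y b).
Proof.
rewrite /Vdm (reindex_inj rev_ord_inj) /=; apply: eq_bigr => a _.
rewrite (reindex_inj rev_ord_inj) /=; apply: eq_big => [b|b _]; rewrite ?rev_ordK //=.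
by have := ltn_ord a; have := ltn_ord b; lia.
Qed.

Lemma Vdm_rev_sign y :
  Vdm (fun i => y (rev_ord i)) =
  (\prod_(a < n) \prod_(b < n | (a < b)%N) (-1)) * Vdm y.
Proof.
rewrite Vdm_rev /Vdm -prod_ltn_exchange -big_split /=; apply: eq_bigr => a _.
by rewrite -big_split /=; apply: eq_bigr => b _; rewrite mulN1r opprB.
Qed.

Lemma prod_offdiag_diff y :
  \prod_(b < n) \prod_(c < n | c != b) (y b - y c) = Vdm y * Vdm (fun i => y (rev_ord i)).
Proof.
rewrite Vdm_rev /Vdm -big_split; apply: eq_bigr => b _.
rewrite (bigID (fun c : 'I_n => (c < b)%N)) /=; congr (_ * _); apply: eq_bigl => c;
  rewrite -(inj_eq val_inj) /=; lia.
Qed.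

End Vandermonde.

Lemma Vdm_neq0 (F : fieldType) n (y : 'I_n -> F) : injective y -> Vdm y != 0.
Proof.
move=> y_inj; apply/prodf_neq0 => a _; apply/prodf_neq0 => b lt_ba.
by rewrite subr_eq0; apply/eqP => /y_inj eq_ab; rewrite eq_ab ltnn in lt_ba.
Qed.

Lemma prod_sign_square (R : pzRingType) n :
  \prod_(a < n) \prod_(b < n) (-1 : R) = (-1) ^+ n.
Proof.
under eq_bigr do rewrite prodr_const card_ord.
by rewrite prodr_const card_ord -exprM -[(-1) ^+ (n * n)]signr_odd oddM andbb signr_odd.
Qed.

Section Cauchy.
Variables (F : fieldType) (n : nat) (y : 'I_n -> F).
Hypothesis y_inj : injective y.

Definition offdiag_poly (b : 'I_n) : {poly F} := \prod_(c < n | c != b) ('X - (y c)%:P).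

Lemma size_offdiag_poly b : (size (offdiag_poly b) <= n)%N.
Proof.
apply: leq_trans (size_poly_prod_leq _ _) _.
rewrite (eq_bigr (fun _ => 2%N)); last by move=> c _; rewrite size_XsubC.
rewrite sum_nat_const.
have -> : #|[pred c : 'I_n | c != b]| = n.-1 by have := cardC1 b; rewrite card_ord.
by have := ltn_ord b; lia.
Qed.

Lemma offdiag_prod_mulmx (u : 'I_n -> F) :
  \matrix_(a, b) \prod_(c < n | c != b) (u a - y c) =
  \matrix_(a < n, k < n) u a ^+ k *m \matrix_(k < n, b < n) (offdiag_poly b)`_k.
Proof.
apply/matrixP => a b; rewrite !mxE.
rewrite [RHS](eq_bigr (fun k : 'I_n => (offdiag_poly b)`_k * u a ^+ k)); last first.
  by move=> k _; rewrite !mxE mulrC.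
rewrite -(horner_coef_wide (u a) (size_offdiag_poly b)) horner_prod.
by apply: eq_bigr => c _; rewrite hornerXsubC.
Qed.

Lemma det_offdiag_prod (u : 'I_n -> F) :
  \det (\matrix_(a, b) \prod_(c < n | c != b) (u a - y c)) =
  Vdm u * Vdm (fun i => y (rev_ord i)).
Proof.
set K := \matrix_(k < n, b < n) (offdiag_poly b)`_k.
(* det K is read off at u = y, where the matrix is diagonal *)
have detK : \det K = Vdm (fun i => y (rev_ord i)).
  apply: (mulIf (Vdm_neq0 y_inj)); rewrite [RHS]mulrC -prod_offdiag_diff.
  rewrite mulrC -[Vdm y]det_powers -det_mulmx -offdiag_prod_mulmx.
  have -> : \matrix_(a, b) \prod_(c < n | c != b) (y a - y c) =
            diag_mx (\row_b \prod_(c < n | c != b) (y b - y c)).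
    apply/matrixP => i j; rewrite !mxE; case: eqP => [-> | /eqP ne_ij] /=.
      by rewrite mulr1n.
    by rewrite mulr0n (bigD1 i ne_ij) /= subrr mul0r.
  by rewrite det_diag; apply: eq_bigr => b _; rewrite mxE.
by rewrite offdiag_prod_mulmx det_mulmx det_powers detK.
Qed.

Lemma det_Cauchy (u : 'I_n -> F) : (forall a b, u a - y b != 0) ->
  \det (\matrix_(a, b) (u a - y b)^-1) =
  Vdm u * Vdm (fun i => y (rev_ord i)) / \prod_(a < n) \prod_(b < n) (u a - y b).
Proof.
move=> uy_neq0.
have prod_neq0 : \prod_(a < n) \prod_(b < n) (u a - y b) != 0.
  by apply/prodf_neq0 => a _; apply/prodf_neq0 => b _.
rewrite -det_offdiag_prod; apply: (mulIf prod_neq0).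
rewrite divfK // mulrC -det_scale_rows; congr (\det _); apply/matrixP => a b.
by rewrite !mxE (bigD1 b) //= mulrAC mulfV ?mul1r.
Qed.

End Cauchy.

Section IzerginExpansion.
Variables (F : fieldType) (eta mu : F) (n : nat) (x y : 'I_n -> F).

Definition xshift (S : {ffun 'I_n -> bool}) (a : 'I_n) : F :=
  if S a then x a else x a + eta.

Lemma det_Aminus_expand (g : F -> F) :
  \det (\matrix_(a, b) (x a ^+ b - g (x a) * (x a - eta) ^+ b)) =
  \sum_(S : {ffun 'I_n -> bool}) \prod_a (if S a then - g (x a) else 1) * Vdm (xshift S).
Proof.
have -> : \matrix_(a, b) (x a ^+ b - g (x a) * (x a - eta) ^+ b) =
          \matrix_(a, b) x a ^+ b + \matrix_(a < n, b < n) (- g (x a) * (x a - eta) ^+ b).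
  by apply/matrixP => a b; rewrite !mxE mulNr.
rewrite det_add_rows; apply: eq_bigr => S _.
pose w a := if S a then x a - eta else x a.
have -> : Vdm (xshift S) = Vdm w.
  by apply: eq_Vdm => a b; rewrite /xshift /w; case: (S a); case: (S b); ring.
rewrite -det_powers -det_scale_rows; congr (\det _); apply/matrixP => a b.
by rewrite !mxE /w; case: (S a); rewrite ?mul1r.
Qed.

Hypotheses (x_inj : injective x) (y_inj : injective y).
Hypotheses (xy_neq0 : forall a b, x a - y b != 0)
           (xy_eta_neq0 : forall a b, x a - y b + eta != 0).

Lemma xshift_sub_neq0 (S : {ffun 'I_n -> bool}) a b : xshift S a - y b != 0.
Proof. by rewrite /xshift; case: (S a); rewrite // addrAC. Qed.

Lemma det_tmu_expand :
  \det (\matrix_(a, b) tmu eta mu (x a - y b)) =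
  \sum_(S : {ffun 'I_n -> bool}) \prod_a (if S a then mu else -1) *
    (Vdm (xshift S) * Vdm (fun i => y (rev_ord i))
     / \prod_(a < n) \prod_(b < n) (xshift S a - y b)).
Proof.
have -> : \matrix_(a, b) tmu eta mu (x a - y b) =
          \matrix_(a, b) (-1 * (x a + eta - y b)^-1) + \matrix_(a, b) (mu * (x a - y b)^-1).
  by apply/matrixP => a b; rewrite !mxE /tmu addrC mulN1r div1r addrAC.
rewrite det_add_rows; apply: eq_bigr => S _.
rewrite -(det_Cauchy y_inj (xshift_sub_neq0 S)) -det_scale_rows; congr (\det _).
by apply/matrixP => a b; rewrite !mxE /xshift; case: (S a).
Qed.

Lemma Izergin_term_weight (S : {ffun 'I_n -> bool}) :
  \prod_a (if S a then mu else -1) * \prod_(a < n) \prod_(b < n) (x a - y b + eta)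
    / \prod_(a < n) \prod_(b < n) (xshift S a - y b) =
  (-1) ^+ n * \prod_a (if S a then - (mu * Eplus eta y (x a)) else 1).
Proof.
rewrite -mulrA -prodf_div -big_split /=.
have -> : (-1 : F) ^+ n = \prod_(a < n) (-1) by rewrite prodr_const card_ord.
rewrite -big_split /=.
apply: eq_bigr => a _; rewrite /xshift; case: (S a).
  by rewrite /Eplus prodf_div mulN1r opprK mulrA.
rewrite [X in _ / X](eq_bigr (fun b => x a - y b + eta)); last by move=> b _; rewrite addrAC.
by rewrite divff //; apply/prodf_neq0 => b _.
Qed.

Lemma Izergin_Aminus :
  Izergin eta mu x y = (-1) ^+ n * Aminus eta x (fun z => mu * Eplus eta y z).
Proof.
rewrite /Izergin /Aminus det_tmu_expand (det_Aminus_expand (fun z => mu * Eplus eta y z)).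
rewrite [LHS]mulr_sumr [X in _ = _ * X]mulr_suml [RHS]mulr_sumr.
apply: eq_bigr => S _.
have prod_neq0 : \prod_(a < n) \prod_(b < n) (xshift S a - y b) != 0.
  by apply/prodf_neq0 => a _; apply/prodf_neq0 => b _; apply: xshift_sub_neq0.
have Vx_neq0 := Vdm_neq0 x_inj.
have Vy_neq0 : Vdm (fun i => y (rev_ord i)) != 0.
  by apply: Vdm_neq0 => i j /y_inj/rev_ord_inj.
rewrite !mulrA -(Izergin_term_weight S).
by field; rewrite Vx_neq0 prod_neq0 Vy_neq0.
Qed.

End IzerginExpansion.

Lemma Izergin_sym (F : fieldType) (eta mu : F) n (x y : 'I_n -> F) :
  Izergin (- eta) mu y x = Izergin eta mu x y.
Proof.
rewrite /Izergin.
have -> : \matrix_(a, b) tmu (- eta) mu (y a - x b) =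
          (-1) *: (\matrix_(a, b) tmu eta mu (x a - y b))^T.
  apply/matrixP => a b; rewrite !mxE /tmu mulN1r.
  have -> : y a - x b + - eta = - (x b - y a + eta) by rewrite opprD opprB.
  by rewrite -[y a - x b]opprB !invrN !mulrN opprB opprK addrC.
have -> : \prod_(a < n) \prod_(b < n) (y a - x b + - eta) =
          \prod_(a < n) \prod_(b < n) (-1 : F) * \prod_(a < n) \prod_(b < n) (x a - y b + eta).
  rewrite exchange_big -big_split /=; apply: eq_bigr => a _.
  by rewrite -big_split /=; apply: eq_bigr => b _; rewrite mulN1r opprD opprB.
rewrite detZ det_tr !Vdm_rev_sign prod_sign_square.
set s := \prod_(a < n) \prod_(b < n | (a < b)%N) (-1 : F).
have -> : Vdm y * (s * Vdm x) = Vdm x * (s * Vdm y) by ring.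
transitivity ((-1) ^+ n * (-1) ^+ n *
  (\prod_(a < n) \prod_(b < n) (x a - y b + eta) / (Vdm x * (s * Vdm y)) *
   \det (\matrix_(a, b) tmu eta mu (x a - y b)))); first by ring.
by rewrite -expr2 sqrr_sign mul1r.
Qed.

Lemma Aminus_opp (F : fieldType) (eta : F) n (x : 'I_n -> F) (f : F -> F) :
  Aminus (- eta) x f = Aplus eta x f.
Proof.
by rewrite /Aminus /Aplus; congr (\det _ / _); apply/matrixP => a b; rewrite !mxE opprK.
Qed.

Local Open Scope complex_scope.
Theorem mainTheorem6 (R : realType) (eta mu : R[i]) (N : nat) (x y : 'I_N -> R[i]) :
  eta != 0 ->
  injective x -> injective y ->
  (forall a b, x a != y b) ->
  (forall a b, x a - y b + eta != 0) ->
  Izergin eta mu x y = (-1) ^+ N * Aminus eta x (fun z => mu * Eplus eta y z) /\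
  Izergin eta mu x y = (-1) ^+ N * Aplus eta y (fun z => mu * Eminus eta x z).
Proof.
move=> _ x_inj y_inj xy_neq xy_eta_neq0.
have xy_neq0 a b : x a - y b != 0 by rewrite subr_eq0.
split; first exact: Izergin_Aminus.
rewrite -Izergin_sym Izergin_Aminus ?Aminus_opp // => a b.
- by rewrite subr_eq0 eq_sym.
- by rewrite -oppr_eq0 opprD opprK opprB.
Qed.
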